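(* Let $\beta\in[0,1)$ and let $u:\mathbb{T}_m\to\mathbb{R}$ satisfy $-\Delta_\beta u(x)\ge0$ for all $x\in\mathbb{T}_m$ and $\liminf_{x\to y}u(x)\ge0$ for every $y\in\partial\mathbb{T}_m$. Then $u(x)\ge0$ for all $x\in\mathbb{T}_m$. Moreover, if $\beta>0$, then either $u>0$ on $\mathbb{T}_m$ or $u\equiv0$ on $\mathbb{T}_m$.
   Context: Tree: for an integer $m\ge2$, $\mathbb{T}_m$ has vertices the root $\emptyset$ and all finite sequences $(\emptyset,a_1,\dots,a_k)$, $a_i\in\{0,\dots,m-1\}$; $|x|$ is the level, successors of $x$ are $(x,i)$, $\hat x$ is the immediate predecessor of $x\ne\emptyset$. A branch is an infinite sequence $(x_n)_{n\ge0}$ with $x_0=\emptyset$ and $x_{n+1}$ a successor of $x_n$; $\partial\mathbb{T}_m$ is the set of branches; for $y=(x_n)$, $\liminf_{x\to y}u(x)=\liminf_{n\to\infty}u(x_n)$. Operator: $p_\beta=1$ if $\beta=0$, $p_\beta=\beta/(1-\beta)$ if $\beta\in(0,1)$. $\Delta_\beta u(\emptyset)=\frac1m\sum_{i=0}^{m-1}u(\emptyset,i)-u(\emptyset)$ and, for $x\ne\emptyset$, $\Delta_\beta u(x)=\big(\beta u(\hat x)+\frac{1-\beta}{m}\sum_{i=0}^{m-1}u(x,i)-u(x)\big)p_\beta^{-|x|}$. *)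

From mathcomp Require Import all_boot all_order all_algebra.
From mathcomp Require Import all_classical all_reals all_analysis.
Set Implicit Arguments. Unset Strict Implicit. Unset Printing Implicit Defensive.
Import Order.TTheory GRing.Theory Num.Theory.
Local Open Scope ring_scope.

(* Encoding: the most recently appended digit is stored FIRST, so the
   vertex (root, a_1, ..., a_k) is represented by [:: a_k; ...; a_1]. *)
Definition vertex (m : nat) := seq 'I_m.

Definition root {m : nat} : vertex m := [::].
Definition succ {m : nat} (x : vertex m) (i : 'I_m) : vertex m := i :: x.
Definition level {m : nat} (x : vertex m) : nat := size x.
Definition pred_v {m : nat} (x : vertex m) : vertex m := behead x.

Definition pbeta {R : realType} (beta : R) : R :=
  if beta == 0 then 1 else beta / (1 - beta).

Definition Delta {R : realType} (m : nat) (beta : R) (u : vertex m -> R)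
  (x : vertex m) : R :=
  if x is [::] then
    (m%:R)^-1 * (\sum_(i < m) u (succ x i)) - u x
  else
    (beta * u (pred_v x) + (1 - beta) / m%:R * (\sum_(i < m) u (succ x i))
       - u x) / (pbeta beta) ^+ (level x).

Definition is_branch {m : nat} (b : nat -> vertex m) : Prop :=
  b 0%N = root /\ forall n, exists i : 'I_m, b n.+1 = succ (b n) i.

(* liminf_{x -> y} u(x) = liminf_n u(x_n), taken in the extended reals. *)
Definition liminf_branch {R : realType} {m : nat} (u : vertex m -> R)
  (b : nat -> vertex m) : \bar R :=
  limn_einf (fun n => (u (b n))%:E).

From Pilot Require Import Defs.
From mathcomp Require Import all_boot all_order all_algebra.
From mathcomp Require Import all_classical all_reals all_analysis.
From mathcomp Require Import lra.
Set Implicit Arguments. Unset Strict Implicit.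
Import Order.TTheory GRing.Theory Num.Theory.
Local Open Scope ring_scope.

(* If [-Delta u >= 0] at [x] and [u] does not increase from the parent of
   [x] to [x], then the mean of [u] over the children of [x] is at most [u x],
   so some child [x'] has [u x' <= u x] and [u] does not increase from [x] to
   [x'] either.  Starting at the ancestor of [x] where [u] is minimal along
   the path from the root, this gives a branch on which [u] stays below [u x]
   for ever, and the boundary condition forces [u x >= 0].
   For the strong form, once [u >= 0] and [beta > 0], the inequality at
   [x != root] bounds both [beta * u (pred_v x)] and the children's mean by
   [u x], so a zero of [u] spreads to the parent and to all children. *)

Lemma pbeta_gt0 (R : realType) (beta : R) :
  0 <= beta -> beta < 1 -> 0 < pbeta beta.
Proof.
rewrite /pbeta; case: eqP => [_|/eqP beta_neq0] beta_ge0 beta_lt1 //.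
by rewrite divr_gt0 ?subr_gt0 // lt_def beta_neq0.
Qed.

Lemma exists_le_mean (R : realFieldType) (n : nat) (F : 'I_n -> R) :
  (0 < n)%N -> exists i, F i <= n%:R^-1 * \sum_(j < n) F j.
Proof.
move=> n_gt0; apply: contrapT => /forallNP F_gt.
have : \sum_(j < n) (n%:R^-1 * \sum_(k < n) F k) < \sum_(j < n) F j.
  apply: ltr_sum => [|i _]; last by rewrite ltNge; apply/negP/F_gt.
  by apply/hasP; exists (Ordinal n_gt0); rewrite ?mem_index_enum.
rewrite sumr_const card_ord -mulrnAr -(mulr_natl (\sum_(j < n) F j)) mulrA.
by rewrite mulVf ?mul1r ?ltxx ?pnatr_eq0 -?lt0n.
Qed.

Lemma limn_einf_le (R : realType) (v : (\bar R)^nat) (c : \bar R) (N : nat) :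
  (forall n, (N <= n)%N -> (v n <= c)%E) -> (limn_einf v <= c)%E.
Proof.
move=> v_le; rewrite limn_einf_lim; apply: lime_le; first exact: is_cvg_einfs.
exists N => // n /= le_Nn; apply: le_trans (v_le n le_Nn).
by apply: ereal_inf_lbound; exists n => /=.
Qed.

Section BranchThrough.
Variables (m : nat) (y : vertex m) (next : vertex m -> 'I_m).

Definition descent (k : nat) : vertex m := iter k (fun z => succ z (next z)) y.

(* Up to level [size y] this runs through the ancestors of [y]: [drop k y] is
   [y] with its last [k] digits removed, the newest digit being stored first. *)
Definition branch_through (n : nat) : vertex m :=
  if (n <= size y)%N then drop (size y - n) y else descent (n - size y).

Lemma branch_throughE k : branch_through (size y + k) = descent k.
Proof.
rewrite /branch_through addKn; case: ifP => // le_k.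
have k0 : k = 0%N by apply/eqP; rewrite -leqn0 -(leq_add2l (size y)) addn0.
by rewrite k0 addn0 subnn drop0.
Qed.

Lemma is_branch_through : is_branch branch_through.
Proof.
split=> [|n]; first by rewrite /branch_through leq0n subn0 drop_size.
have [lt_ny|le_yn] := ltnP n (size y); last first.
  move: le_yn => /subnKC <-; set k := (n - size y)%N.
  by exists (next (descent k)); rewrite -addnS !branch_throughE.
have i0 : 'I_m by case: y lt_ny => // i _ _; exact: i.
exists (nth i0 y (size y - n.+1)).
rewrite /branch_through lt_ny ltnW // /succ (@drop_nth _ i0) ?subnSK //.
exact: leq_subr.
Qed.

End BranchThrough.

Section Supersolution.
Variables (R : realType) (m : nat) (beta : R) (u : vertex m -> R).
Hypotheses (beta_ge0 : 0 <= beta) (beta_lt1 : beta < 1).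
Hypothesis u_super : forall x, 0 <= - Delta beta u x.

Definition child_mean (x : vertex m) : R :=
  m%:R^-1 * \sum_(i < m) u (succ x i).

Lemma child_mean_root_le : child_mean Defs.root <= u Defs.root.
Proof. by have := u_super Defs.root; rewrite oppr_ge0 subr_le0. Qed.

Lemma super_succ x a :
  beta * u x + (1 - beta) * child_mean (succ x a) <= u (succ x a).
Proof.
have := u_super (succ x a); rewrite /Delta oppr_ge0 pmulr_lle0; last first.
  by rewrite invr_gt0 exprn_gt0 // pbeta_gt0.
by rewrite subr_le0 mulrA.
Qed.

Definition not_above_parent (x : vertex m) : Prop :=
  x = Defs.root \/ u x <= u (pred_v x).

Lemma child_mean_le x : not_above_parent x -> child_mean x <= u x.
Proof.
case: x => [_|a x [//|/= le_parent]]; first exact: child_mean_root_le.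
have le_beta : beta * u (a :: x) <= beta * u x by exact: ler_wpM2l.
have := super_succ x a; rewrite /succ => le_super.
have : (1 - beta) * child_mean (a :: x) <= (1 - beta) * u (a :: x) by lra.
by rewrite ler_pM2l ?subr_gt0.
Qed.

Lemma exists_not_above_parent_le x :
  exists y, not_above_parent y /\ u y <= u x.
Proof.
elim: x => [|a x [y [y_not_above le_yx]]]; first by exists Defs.root; split=> //; left.
have [le_parent|lt_parent] := lerP (u (a :: x)) (u x).
  by exists (a :: x); split=> //; right.
by exists y; split=> //; apply: le_trans le_yx (ltW lt_parent).
Qed.

Lemma exists_branch_le x : (0 < m)%N ->
  exists2 b, is_branch b & exists N, forall n, (N <= n)%N -> u (b n) <= u x.
Proof.
move=> m_gt0; have [y [y_not_above le_yx]] := exists_not_above_parent_le x.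
have [next le_next] :=
  choice (fun z => exists_le_mean (fun i => u (succ z i)) m_gt0).
exists (branch_through y next); first exact: is_branch_through.
exists (size y) => n /subnKC <-; rewrite branch_throughE.
suff : not_above_parent (descent y next (n - size y)) /\
       u (descent y next (n - size y)) <= u y.
  by case=> _ /le_trans; apply.
elim: (n - size y)%N => [|k [not_above le_y]] //=.
have le_parent := le_trans (le_next _) (child_mean_le not_above).
by split; [right | exact: le_trans le_parent le_y].
Qed.

Lemma supersolution_ge0 : (0 < m)%N ->
  (forall b, is_branch b -> (0 <= liminf_branch u b)%E) -> forall x, 0 <= u x.
Proof.
move=> m_gt0 u_boundary x; rewrite -lee_fin.
have [b b_branch [N le_bx]] := exists_branch_le x m_gt0.
apply: le_trans (u_boundary b b_branch) _.
by apply: (limn_einf_le (N := N)) => n le_Nn; rewrite lee_fin le_bx.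
Qed.

Section Nonnegative.
Hypothesis u_ge0 : forall x, 0 <= u x.

Lemma child_mean_ge0 x : 0 <= child_mean x.
Proof. by rewrite mulr_ge0 ?invr_ge0 ?ler0n ?sumr_ge0. Qed.

Lemma child_mean_le0 x : u x = 0 -> child_mean x <= 0.
Proof.
case: x => [|a x] u_x0; first by rewrite -u_x0 child_mean_root_le.
have := super_succ x a; rewrite /succ u_x0.
have := mulr_ge0 beta_ge0 (u_ge0 x) => beta_ux_ge0 le_super.
have : (1 - beta) * child_mean (a :: x) <= 0 by lra.
by rewrite pmulr_rle0 ?subr_gt0.
Qed.

Lemma succ_eq0 x a : (0 < m)%N -> u x = 0 -> u (succ x a) = 0.
Proof.
move=> m_gt0 /child_mean_le0; rewrite pmulr_rle0 ?invr_gt0 ?ltr0n // => sum_le0.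
apply/eqP; rewrite eq_le u_ge0 andbT; apply: le_trans sum_le0.
by rewrite (bigD1 a) //= lerDl sumr_ge0.
Qed.

Lemma parent_eq0 x a : 0 < beta -> u (succ x a) = 0 -> u x = 0.
Proof.
move=> beta_gt0 u_xa0; have := super_succ x a; rewrite u_xa0.
have beta_le1 : 0 <= 1 - beta by rewrite subr_ge0 ltW.
have := mulr_ge0 beta_le1 (child_mean_ge0 (succ x a)).
move=> mean_term_ge0 le_super; have : beta * u x <= 0 by lra.
by rewrite pmulr_rle0 // => ux_le0; apply/eqP; rewrite eq_le ux_le0 u_ge0.
Qed.

Lemma eq0_everywhere : (0 < m)%N -> 0 < beta ->
  (exists x, u x = 0) -> forall x, u x = 0.
Proof.
move=> m_gt0 beta_gt0 [x0 ux0_eq0].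
have u_root0 : u Defs.root = 0.
  by elim: x0 ux0_eq0 => // a x IHx /(parent_eq0 beta_gt0).
by elim=> // a x IHx; apply: succ_eq0.
Qed.

End Nonnegative.
End Supersolution.

Unset Implicit Arguments.
Theorem theorem2p1 (R : realType) (m : nat) (hm : (2 <= m)%N) (beta : R)
  (hb0 : 0 <= beta) (hb1 : beta < 1) (u : vertex m -> R)
  (hsuper : forall x : vertex m, 0 <= - @Delta R m beta u x)
  (hbd : forall b : nat -> vertex m, is_branch b ->
           (0 <= liminf_branch u b)%E) :
  (forall x : vertex m, 0 <= u x) /\
  (0 < beta ->
     (forall x : vertex m, 0 < u x) \/ (forall x : vertex m, u x = 0)).
Proof.
have m_gt0 : (0 < m)%N by apply: leq_trans hm.
have u_ge0 := supersolution_ge0 hb0 hb1 hsuper m_gt0 hbd.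
split=> // beta_gt0.
have [u_zero|u_nonzero] := pselect (exists x, u x = 0).
  by right; exact: eq0_everywhere hb0 hb1 hsuper u_ge0 m_gt0 beta_gt0 u_zero.
left=> x; rewrite lt_def u_ge0 andbT; apply/eqP => ux0.
by apply: u_nonzero; exists x.
Qed.
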